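(* Let $G$ be a graph that has a vertex $v$ such that $G-v$ is acyclic. Then for every $k\ge 2$ and every $r\ge 3$, $R_r(\mathcal{B}(G),k)\le 4k|V(G)|+r-2$.
   Context: For a graph $G$, a hypergraph $H$ is a Berge-$G$ hypergraph if there are an injective map $\phi:V(G)\to V(H)$ and pairwise distinct hyperedges $e_{xy}\in E(H)$, one for each $xy\in E(G)$, with $\phi(x),\phi(y)\in e_{xy}$. $\mathcal{B}(G)$ denotes the family of all Berge-$G$ hypergraphs. For a family $\mathcal{H}$ of $r$-uniform hypergraphs, $R_r(\mathcal{H},k)$ is the smallest $n$ such that every $k$-coloring of the hyperedges of the complete $r$-uniform hypergraph $K_n^r$ contains a monochromatic subhypergraph belonging to $\mathcal{H}$. *)

From mathcomp Require Import all_boot.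
Set Implicit Arguments. Unset Strict Implicit. Unset Printing Implicit Defensive.

Definition simple_graph (T : finType) (g : rel T) : Prop :=
  symmetric g /\ irreflexive g.

(* The graph G - v is acyclic: there is no cycle (a duplicate-free closed
   g-walk on at least 3 vertices) avoiding v. *)
Definition acyclic_minus (T : finType) (g : rel T) (v : T) : Prop :=
  forall c : seq T, 3 <= size c -> v \notin c -> uniq c -> ~~ cycle g c.

Definition edge_set (T : finType) (g : rel T) : {set {set T}} :=
  [set [set x; y] | x in T, y in T & g x y].

(* A k-colouring of the hyperedges of K_n^r: a map from subsets of 'I_n
   (only the r-subsets matter) to colours 'I_k.
   [mono_berge g r col] : there is a colour c and a Berge-G hypergraph all of
   whose hyperedges are r-subsets of 'I_n (edges of K_n^r) of colour c. *)
Definition mono_berge (T : finType) (g : rel T) (r n k : nat)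
    (col : {set 'I_n} -> 'I_k) : Prop :=
  exists (c : 'I_k) (phi : T -> 'I_n) (eh : {set T} -> {set 'I_n}),
    [/\ injective phi,
        {in edge_set g &, injective eh} &
        forall x y, g x y ->
          [/\ phi x \in eh [set x; y], phi y \in eh [set x; y],
              #|eh [set x; y]| = r & col (eh [set x; y]) = c]].

Definition berge_ramsey_prop (T : finType) (g : rel T) (r k n : nat) : Prop :=
  forall col : {set 'I_n} -> 'I_k, mono_berge g r col.

From mathcomp Require Import all_boot zify.
Set Implicit Arguments. Unset Strict Implicit. Unset Printing Implicit Defensive.

(* Fix a set S of r - 2 vertices of K_n^r containing the image x of v. The
   hyperedges S + {a, b} with a, b outside S form a k-coloured complete graph on
   4k|V(G)| vertices, so some colour class has average degree above
   4(|V(G)| - 2) and hence a subgraph of minimum degree above 2(|V(G)| - 2).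
   Removing leaves one by one, the forest G - v embeds greedily into that
   subgraph so that each vertex y gets an image phi y and a private neighbour
   psi y.  An edge yz of G - v is realised by S + {phi y, phi z} and an edge vz
   by S + {phi z, psi z}; all these hyperedges are distinct. *)

Section ForestLeaf.
Variables (T : finType) (g : rel T) (v : T).
Hypotheses (g_sym : symmetric g) (g_irr : irreflexive g).
Hypothesis g_acyclic : acyclic_minus g v.

Lemma exists_maximal_path (A : {set T}) x p :
  all (mem A) (x :: p) -> uniq (x :: p) -> path g x p ->
  exists x' p', [/\ all (mem A) (x' :: p'), uniq (x' :: p'), path g x' p' &
    {in A, forall y, g x' y -> y \in x' :: p'}].
Proof.
have [n] := ubnP (#|T| - size (x :: p)); elim: n x p => // n IHn x p lt_n Ap up gp.
case: (boolP [exists y in A, g x y && (y \notin x :: p)]); last first.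
  rewrite negb_exists_in => /forallP maxp; exists x, p; split=> // y yA gxy.
  by have := maxp y; rewrite yA gxy negbK.
case/exists_inP=> y yA /andP[gxy yNp].
have uyp : uniq (y :: x :: p) by rewrite /= yNp.
have /card_uniqP size_yp := uyp; have := max_card (mem (y :: x :: p)).
rewrite size_yp => le_yp_T.
apply: (IHn y (x :: p)); first by move: lt_n le_yp_T => /=; lia.
- by rewrite /= yA.
- exact: uyp.
- by rewrite /= g_sym gxy.
Qed.

Lemma path_neighbour_head x p w : uniq (x :: p) -> path g x p -> v \notin x :: p ->
  w \in p -> g x w -> w = head x p.
Proof.
move=> uxp gxp vNp wp gxw; case: (eqVneq w (head x p)) => // w_head; exfalso.
set i := index w p.
have ip : i < size p by rewrite index_mem.
have i_gt0 : 0 < i.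
  rewrite lt0n; apply: contraNneq w_head => i0.
  by rewrite -(nth_index x wp) -/i i0 nth0.
have size_c : 3 <= size (x :: take i.+1 p) by rewrite /= (size_takel ip); lia.
have vNc : v \notin x :: take i.+1 p.
  by apply: contra vNp; rewrite !inE => /orP[-> //|/mem_take ->]; rewrite orbT.
have /negP[] := g_acyclic size_c vNc (take_uniq i.+2 uxp).
rewrite /= rcons_path take_path //= (last_nth x) (size_takel ip) /=.
by rewrite nth_take // nth_index // g_sym gxw.
Qed.

Lemma forest_leaf (A : {set T}) : v \notin A -> A != set0 ->
  exists2 u, u \in A & {in A &, forall y z, g u y -> g u z -> y = z}.
Proof.
move=> vNA /set0Pn[x0 x0A].
have [|x [p [Axp uxp gxp maxp]]] := @exists_maximal_path A x0 [::] _ isT isT.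
  by rewrite /= x0A.
have vNxp : v \notin x :: p by apply: contra vNA => /(allP Axp).
have nbr_head y : y \in A -> g x y -> y = head x p.
  move=> yA gxy; have yp : y \in p.
    by have := maxp y yA gxy; rewrite inE => /orP[/eqP xy|//]; move: gxy; rewrite -xy g_irr.
  exact: path_neighbour_head uxp gxp vNxp yp gxy.
exists x; first by case/andP: Axp.
by move=> y z yA zA gxy gxz; rewrite (nbr_head y yA gxy) (nbr_head z zA gxz).
Qed.

End ForestLeaf.

Section MinDegreeSubgraph.
Variables (U : finType) (adj : rel U).
Hypothesis adj_sym : symmetric adj.

Definition deg (W : {set U}) a := #|[set b in W | adj a b]|.

Lemma deg_setD1 W a b : deg W b <= deg (W :\ a) b + adj b a.
Proof.
rewrite /deg (cardsD1 a [set c in W | adj b c]) inE addnC.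
have -> : [set c in W | adj b c] :\ a = [set c in W :\ a | adj b c].
  by apply/setP => c; rewrite !inE andbA.
by rewrite leq_add2l; case: (a \in W); case: (adj b a).
Qed.

Lemma sum_deg_setD1 (W : {set U}) a : a \in W ->
  \sum_(b in W) deg W b <= \sum_(b in W :\ a) deg (W :\ a) b + 2 * deg W a.
Proof.
move=> aW; rewrite (bigD1 a aW) /= addnC mulSn mul1n addnA leq_add2r.
have -> : \sum_(b in W | b != a) deg W b = \sum_(b in W :\ a) deg W b.
  by apply: eq_bigl => b; rewrite !inE andbC.
have nbr_a : \sum_(b in W :\ a) (adj b a : nat) <= deg W a.
  rewrite /deg -sum1_card big_mkcond /= [X in _ <= X]big_mkcond /= leq_sum // => b _.
  by rewrite !inE adj_sym; case: (b == a); case: (b \in W); case: (adj a b).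
apply: leq_trans (leq_add (leqnn _) nbr_a); rewrite -big_split leq_sum // => b _.
exact: deg_setD1.
Qed.

Lemma exists_subgraph_min_degree t (W : {set U}) :
  2 * t * #|W| < \sum_(a in W) deg W a ->
  exists2 W', W' != set0 & {in W', forall a, t < deg W' a}.
Proof.
have [n] := ubnP #|W|; elim: n W => // n IHn W lt_W dense.
case: (boolP [exists a in W, deg W a <= t]) => [/exists_inP[a aW low_a]|]; last first.
  rewrite negb_exists_in => /forallP high; exists W => [|a aW].
    by apply: contraTneq dense => ->; rewrite big_set0.
  by have := high a; rewrite aW ltnNge.
have card_Wa := cardsD1 a W; rewrite aW in card_Wa.
apply: (IHn (W :\ a)); first by lia.
by have := sum_deg_setD1 aW; lia.
Qed.
End MinDegreeSubgraph.

Section PrivateEmbedding.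
Variables (U : finType) (adj : rel U) (W : {set U}) (t : nat) (w0 : U).
Hypotheses (adj_sym : symmetric adj) (adj_irr : irreflexive adj).
Hypotheses (w0W : w0 \in W) (W_min_deg : {in W, forall a, t < deg adj W a}).
Variables (T : finType) (g : rel T) (v : T).
Hypotheses (g_sym : symmetric g) (g_irr : irreflexive g).
Hypothesis g_leaf : forall A : {set T}, v \notin A -> A != set0 ->
  exists2 u, u \in A & {in A &, forall y z, g u y -> g u z -> y = z}.

Definition private_embedding (A : {set T}) (phi psi : T -> U) :=
  [/\ {in A, forall y, phi y \in W /\ adj (phi y) (psi y)},
      {in A &, forall y z, g y z -> adj (phi y) (phi z)},
      {in A &, injective phi}, {in A &, injective psi} &
      {in A &, forall y z, phi y != psi z}].

Lemma exists_fresh_neighbour (B : {set U}) q : q \in W -> #|B| <= t ->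
  exists a, [/\ a \in W, adj q a & a \notin B].
Proof.
move=> qW le_B_t.
case: (boolP ([set b in W | adj q b] \subset B)) => [/subset_leq_card|].
  by have := W_min_deg qW; rewrite /deg; lia.
by case/subsetPn=> a; rewrite inE => /andP[aW qa] aNB; exists a.
Qed.

Lemma extend_private_embedding (A : {set T}) u phi psi :
  u \in A -> {in A &, forall y z, g u y -> g u z -> y = z} ->
  2 * #|A :\ u| <= t -> private_embedding (A :\ u) phi psi ->
  exists phi' psi', private_embedding A phi' psi'.
Proof.
move=> uA u_leaf le_t [emb_W emb_g phi_inj psi_inj phi_psi].
set A' := A :\ u; set Im := phi @: A' :|: psi @: A'.
have le_Im_t : #|Im| <= t.
  apply: leq_trans (leq_card_setU _ _) (leq_trans _ le_t).
  by rewrite mul2n -addnn leq_add ?leq_imset_card.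
have phi_Im y : y \in A' -> phi y \in Im by move=> yA; rewrite inE imset_f.
have psi_Im y : y \in A' -> psi y \in Im by move=> yA; rewrite inE imset_f ?orbT.
have A'P y : y \in A -> y != u -> y \in A' by move=> yA yu; rewrite !inE yu.
pose q := if [pick p in A' | g u p] is Some p then phi p else w0.
have qW : q \in W by rewrite /q; case: pickP => [p /andP[pA _]|_] //; case: (emb_W p pA).
have q_nbr z : z \in A -> z != u -> g u z -> q = phi z.
  move=> zA zu guz; rewrite /q; case: pickP => [p /andP[pA gup]|noP].
    by rewrite (u_leaf p z) //; case/setD1P: pA.
  by have := noP z; rewrite A'P ?guz.
have [a [aW qa aNIm]] := exists_fresh_neighbour qW le_Im_t.
have [b [_ ab bNIm]] := exists_fresh_neighbour aW le_Im_t.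
exists (fun y => if y == u then a else phi y), (fun y => if y == u then b else psi y).
split=> [y yA | y z yA zA | y z yA zA | y z yA zA | y z yA zA];
  (case: (eqVneq y u) => [yu | yu]; [subst y; rewrite /= ?eqxx | rewrite /= ?(negbTE yu)]).
all: try (case: (eqVneq z u) => [zu | zu]; [subst z; rewrite /= ?eqxx | rewrite /= ?(negbTE zu)]).
- by split.
- exact: emb_W (A'P y yA yu).
- by rewrite g_irr.
- by move=> guz; rewrite -(q_nbr z zA zu guz) adj_sym.
- by move=> gyu; rewrite -(q_nbr y yA yu) // g_sym.
- exact: emb_g (A'P y yA yu) (A'P z zA zu).
- by [].
- by move=> e; move: aNIm; rewrite e phi_Im ?A'P.
- by move=> e; move: aNIm; rewrite -e phi_Im ?A'P.
- exact: phi_inj (A'P y yA yu) (A'P z zA zu).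
- by [].
- by move=> e; move: bNIm; rewrite e psi_Im ?A'P.
- by move=> e; move: bNIm; rewrite -e psi_Im ?A'P.
- exact: psi_inj (A'P y yA yu) (A'P z zA zu).
- by apply: contraTneq ab => ->; rewrite adj_irr.
- by apply: contraNneq aNIm => ->; rewrite psi_Im ?A'P.
- by apply: contraNneq bNIm => <-; rewrite phi_Im ?A'P.
- exact: phi_psi (A'P y yA yu) (A'P z zA zu).
Qed.

Lemma exists_private_embedding (A : {set T}) : v \notin A -> 2 * (#|A| - 1) <= t ->
  exists phi psi, private_embedding A phi psi.
Proof.
have [n] := ubnP #|A|; elim: n A => // n IHn A lt_A vNA le_t.
case: (eqVneq A set0) => [-> | A_n0].
  by exists (fun=> w0), (fun=> w0); split=> y; rewrite inE.
have [u uA u_leaf] := g_leaf vNA A_n0.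
have card_Au := cardsD1 u A; rewrite uA in card_Au.
have [phi [psi emb]] : exists phi psi, private_embedding (A :\ u) phi psi.
  by apply: IHn; [lia | apply: contra vNA => /setD1P[] | lia].
by apply: (extend_private_embedding uA u_leaf _ emb); lia.
Qed.
End PrivateEmbedding.
Lemma card_preim_sum (U : finType) k (B : {set U}) (f : U -> 'I_k) :
  \sum_(c < k) #|[set b in B | f b == c]| = #|B|.
Proof.
rewrite -sum1_card (partition_big f xpredT) //=.
by apply: eq_bigr => c _; rewrite -sum1_card; apply: eq_bigl => b; rewrite !inE.
Qed.

Lemma exists_ge_average k (D : 'I_k -> nat) : 0 < k ->
  exists c, \sum_(i < k) D i <= k * D c.
Proof.
move=> k_gt0; have [|c _ max_c] := @eq_bigmax_cond _ xpredT D; first by rewrite card_ord.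
exists c; rewrite -max_c; apply: leq_trans (_ : \sum_(i < k) \max_(j < k) D j <= _).
  by apply: leq_sum => i _; apply: leq_bigmax.
by rewrite sum_nat_const card_ord.
Qed.

Lemma card_setU2_notin (U : finType) (S : {set U}) a b :
  a \notin S -> b \notin S -> a != b -> #|S :|: [set a; b]| = #|S| + 2.
Proof.
move=> aNS bNS ab; rewrite setUC -setUA cardsU1 cardsU1 !inE (negbTE ab) /=.
by rewrite aNS bNS addnA addnC.
Qed.

Section LinkGraph.
Variables (n k : nat) (col : {set 'I_n} -> 'I_k) (S : {set 'I_n}).

Definition link c a b := [&& a \notin S, b \notin S, a != b & col (S :|: [set a; b]) == c].

Lemma link_sym c : symmetric (link c).
Proof.
move=> a b; have set2C : [set b; a] = [set a; b] by apply/setP => w; rewrite !inE orbC.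
by rewrite /link (eq_sym b a) set2C; case: (a \in S); case: (b \in S).
Qed.

Lemma link_irr c : irreflexive (link c).
Proof. by move=> a; rewrite /link eqxx !andbF. Qed.

Lemma sum_link_deg :
  \sum_(c < k) \sum_(a in ~: S) deg (link c) (~: S) a = #|~: S| * (#|~: S| - 1).
Proof.
rewrite exchange_big /= -sum_nat_const; apply: eq_bigr => a aNS.
rewrite (cardsD1 a) aNS addKn.
rewrite -(card_preim_sum (~: S :\ a) (fun b => col (S :|: [set a; b]))).
apply: eq_bigr => c _; apply: eq_card => b.
move: aNS; rewrite /link !inE => ->.
by rewrite (eq_sym a b); case: (b \in S); case: (b == a).
Qed.

Lemma exists_dense_link : 0 < k ->
  exists c, #|~: S| * (#|~: S| - 1) <= k * \sum_(a in ~: S) deg (link c) (~: S) a.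
Proof. by move=> k_gt0; rewrite -sum_link_deg; apply: exists_ge_average. Qed.

Lemma exists_link_min_degree m : 0 < k -> 0 < m -> #|~: S| = 4 * k * m ->
  exists c (W : {set 'I_n}), W != set0 /\ {in W, forall a, 2 * (m - 2) < deg (link c) W a}.
Proof.
move=> k_gt0 m_gt0 card_V; have [c] := exists_dense_link k_gt0.
rewrite card_V; set sum_deg := \sum_(a in _) _ => dense_c.
have sum_ge : 4 * m * (4 * k * m - 1) <= sum_deg.
  by rewrite -(leq_pmul2l k_gt0); apply: leq_trans dense_c; nia.
have [|W W_n0 W_deg] := @exists_subgraph_min_degree _ _ (link_sym c) (2 * (m - 2)) (~: S).
  by rewrite card_V; nia.
by exists c, W.
Qed.

Variables (c : 'I_k) (x : 'I_n) (r : nat).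
Hypotheses (xS : x \in S) (card_S : #|S| = r - 2) (r_ge2 : 2 <= r).
Variables (T : finType) (g : rel T) (v : T) (W : {set 'I_n}) (phi0 psi0 : T -> 'I_n).
Hypotheses (g_sym : symmetric g) (g_irr : irreflexive g).
Hypothesis emb : private_embedding (link c) W g [set~ v] phi0 psi0.

Definition berge_vertex y := if y == v then x else phi0 y.

(* An edge [y z] of [G - v] becomes [S + {phi0 y, phi0 z}] and an edge [v z]
   becomes [S + {phi0 z, psi0 z}], the image [x] of [v] lying in [S]. *)
Definition berge_edge (e : {set T}) :=
  S :|: berge_vertex @: e :|: (if v \in e then psi0 @: (e :\ v) else set0).

Lemma link_phi0_psi0 y : y != v -> link c (phi0 y) (psi0 y).
Proof. by move=> yv; case: emb => /(_ y) [|_ //]; rewrite !inE. Qed.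

Lemma phi0_notin_S y : y != v -> phi0 y \notin S.
Proof. by move/link_phi0_psi0/and4P => []. Qed.

Lemma psi0_notin_S y : y != v -> psi0 y \notin S.
Proof. by move/link_phi0_psi0/and4P => []. Qed.

Lemma phi0_neq_psi0 y z : y != v -> z != v -> phi0 y != psi0 z.
Proof. by move=> yv zv; case: emb => _ _ _ _; apply; rewrite !inE. Qed.

Lemma berge_vertex_inj : injective berge_vertex.
Proof.
rewrite /berge_vertex => y z; case: (eqVneq y v) => [-> | yv]; case: (eqVneq z v) => [-> | zv] //.
- by move=> e; move: (phi0_notin_S zv); rewrite -e xS.
- by move=> e; move: (phi0_notin_S yv); rewrite e xS.
- by case: emb => _ _ phi0_inj _ _; apply: phi0_inj; rewrite !inE.
Qed.

Lemma mem_berge_vertex (e : {set T}) y : y \in e -> berge_vertex y \in berge_edge e.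
Proof. by move=> ye; rewrite !inE imset_f ?orbT. Qed.

Lemma mem_phi0_berge_edge (e : {set T}) w : w != v -> (phi0 w \in berge_edge e) = (w \in e).
Proof.
move=> wv; rewrite /berge_edge !inE (negbTE (phi0_notin_S wv)) /=.
have -> : phi0 w = berge_vertex w by rewrite /berge_vertex (negbTE wv).
rewrite mem_imset; last exact: berge_vertex_inj.
case: (v \in e); rewrite ?inE ?orbF //.
case: imsetP => [[y /setD1P[yv _] eq_w] | _]; last by rewrite orbF.
by move: (phi0_neq_psi0 wv yv); rewrite -eq_w /berge_vertex (negbTE wv) eqxx.
Qed.

Lemma mem_psi0_berge_edge (e : {set T}) w : w != v ->
  (psi0 w \in berge_edge e) = (v \in e) && (w \in e).
Proof.
move=> wv; rewrite /berge_edge !inE (negbTE (psi0_notin_S wv)) /=.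
case: imsetP => [[y ye] | _].
  rewrite /berge_vertex; case: (eqVneq y v) => [_ e_w | yv e_w].
    by move: (psi0_notin_S wv); rewrite e_w xS.
  by move: (phi0_neq_psi0 yv wv); rewrite e_w eqxx.
case: (v \in e); last by rewrite inE.
apply/imsetP/idP => [[y /setD1P[yv ye]] | we]; last by exists w; rewrite ?inE ?wv.
by case: emb => _ _ _ psi0_inj _ e_w; rewrite (psi0_inj w y) // !inE ?wv ?yv.
Qed.

Lemma berge_edge_link y z : g y z ->
  exists a b, link c a b /\ berge_edge [set y; z] = S :|: [set a; b].
Proof.
have set2C (a b : T) : [set a; b] = [set b; a] by apply/setP => w; rewrite !inE orbC.
have edge_v w : g v w -> exists a b, link c a b /\ berge_edge [set v; w] = S :|: [set a; b].
  move=> gvw; have wv : w != v by apply: contraTneq gvw => ->; rewrite g_irr.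
  exists (phi0 w), (psi0 w); split; first exact: link_phi0_psi0.
  rewrite /berge_edge !inE eqxx /= setU1K ?inE 1?eq_sym // imsetU1 !imset_set1.
  rewrite /berge_vertex eqxx (negbTE wv); apply/setP => a.
  by rewrite !inE; case: (eqVneq a x) => [-> | _]; rewrite ?xS //= orbA.
case: (eqVneq y v) => [-> | yv]; first exact: edge_v.
case: (eqVneq z v) => [-> gyv | zv gyz]; first by rewrite set2C; apply: edge_v; rewrite g_sym.
exists (phi0 y), (phi0 z); split; first by case: emb => _ emb_g _ _ _; apply: emb_g; rewrite ?inE.
rewrite /berge_edge !inE (eq_sym v) (negbTE yv) (eq_sym v) (negbTE zv) setU0.
by rewrite imsetU1 imset_set1 /berge_vertex (negbTE yv) (negbTE zv).
Qed.

Lemma berge_edge_inj : {in edge_set g &, injective berge_edge}.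
Proof.
have edge_other e : e \in edge_set g -> exists2 o, o != v & o \in e.
  case/imset2P=> y z _; rewrite inE => gyz ->.
  case: (eqVneq y v) => [yv | yv]; last by exists y; rewrite ?inE ?eqxx.
  by exists z; rewrite ?inE ?eqxx ?orbT // -yv; apply: contraTneq gyz => ->; rewrite g_irr.
(* [v] is recognised in [e] by the private neighbour [psi0 o] of a vertex [o] of [e]. *)
have v_mem e1 e2 : e1 \in edge_set g -> berge_edge e1 = berge_edge e2 -> v \in e1 -> v \in e2.
  move=> /edge_other[o ov oe1] eq12 ve1.
  by have := mem_psi0_berge_edge e2 ov; rewrite -eq12 mem_psi0_berge_edge // ve1 oe1 => /esym/andP[].
move=> e1 e2 e1g e2g eq12; apply/setP => w; case: (eqVneq w v) => [-> | wv].
  by apply/idP/idP; [apply: v_mem eq12 | apply: v_mem (esym eq12)].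
by rewrite -!(mem_phi0_berge_edge _ wv) eq12.
Qed.

Lemma link_embedding_mono_berge : mono_berge g r col.
Proof.
exists c, berge_vertex, berge_edge; split=> [||y z gyz]; [exact: berge_vertex_inj | exact: berge_edge_inj |].
have [vy vz] := (mem_berge_vertex (set21 y z), mem_berge_vertex (set22 y z)).
have [a [b [/and4P[aNS bNS ab /eqP col_ab] eq_ab]]] := berge_edge_link gyz.
by rewrite eq_ab in vy vz *; rewrite card_setU2_notin // card_S subnK.
Qed.

End LinkGraph.

Theorem corollary3 (T : finType) (g : rel T) (v : T) (k r : nat) :
  simple_graph g -> acyclic_minus g v -> 2 <= k -> 3 <= r ->
  exists n, n <= 4 * k * #|T| + r - 2 /\ berge_ramsey_prop g r k n.
Proof.
move=> [g_sym g_irr] g_acyclic k_ge2 r_ge3.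
set m := #|T|; set N := 4 * k * m.
have m_gt0 : 0 < m by apply/card_gt0P; exists v.
exists (N + (r - 2)); split=> [|col]; first by lia.
set S := [set rshift N i | i : 'I_(r - 2)].
have card_S : #|S| = r - 2 by rewrite card_imset ?card_ord //; apply: rshift_inj.
have card_V : #|~: S| = N by rewrite cardsCs setCK card_S card_ord addnK.
have r_pos : 0 < r - 2 by lia.
have xS : rshift N (Ordinal r_pos) \in S by apply: imset_f.
have [c [W [/set0Pn[w0 w0W] W_deg]]] := exists_link_min_degree col (ltnW k_ge2) m_gt0 card_V.
have [phi0 [psi0 emb]] : exists phi0 psi0,
    private_embedding (link col S c) W g [set~ v] phi0 psi0.
  apply: (exists_private_embedding (link_sym col S c) (link_irr col S c) w0W W_deg
    g_sym g_irr (forest_leaf g_sym g_irr g_acyclic)); first by rewrite setC11.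
  by rewrite cardsC1; lia.
exact: (link_embedding_mono_berge xS card_S (ltnW r_ge3) g_sym g_irr emb).
Qed.
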